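(* Define $A_n^r(q)$ for integers $n,r\ge 0$ by $A_0^0(q)=1$, $A_0^r(q)=0$ for $r\ge1$, $A_{n+1}^0(q)=1$ for $n\ge 0$, and for $n,r\ge 0$ $$A_{n+1}^{r+1}(q)=q^{r+1}A_n^{r+1}(q)+(q^{n-r}-q^r)A_n^r(q).$$ Then for all integers $n,r\ge 0$, $$A_n^r(q)=\mathrm{CT}_w\left[\frac{(1-w)(1+w)^n q^{r(n-r)}}{w^r}\sum_{i=0}^{\infty}(-1)^i q^{-(i+1)i/2-i(n-2r)}\binom{i+n-2r}{i}_q w^i\right].$$
   Context: For a formal Laurent series $P(w)$ (with coefficients Laurent polynomials in $q$), $\mathrm{CT}_w P(w)$ denotes the coefficient of $w^0$. The $q$-binomial coefficient is $\binom{m}{k}_q=\frac{(1-q^m)(1-q^{m-1})\cdots(1-q^{m-k+1})}{(1-q)(1-q^2)\cdots(1-q^k)}$ when $0\le k\le m$ (integers), and $\binom{m}{k}_q=0$ otherwise (in particular when $m<k$ or $m<0$). *)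

From HB Require Import structures.
From mathcomp Require Import all_boot all_order all_algebra.
From mathcomp Require Import fraction.
Set Implicit Arguments. Unset Strict Implicit. Unset Printing Implicit Defensive.
Import Order.TTheory GRing.Theory Num.Theory.
Local Open Scope ring_scope.

(* The field Q(q) of rational functions in q; Laurent polynomials in q
   (with integer coefficients) embed injectively into it. *)
Definition Fq := {fraction {poly rat}}.
Definition q : Fq := @tofrac _ ('X : {poly rat}).

Definition qbinom (m : int) (k : nat) : Fq :=
  match m with
  | Posz m' => if (k <= m')%N then
      (\prod_(j < k) (1 - q ^+ (m' - j)%N)) / (\prod_(j < k) (1 - q ^+ j.+1))
      else 0
  | Negz _ => 0
  end.

Fixpoint A (n r : nat) : Fq :=
  match n, r with
  | 0%N, 0%N => 1
  | 0%N, _.+1 => 0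
  | _.+1, 0%N => 1
  | n'.+1, r'.+1 =>
      q ^+ r'.+1 * A n' r'.+1 + (q ^ (n'%:Z - r'%:Z) - q ^+ r') * A n' r'
  end.

(* Formal Laurent series in w with coefficients in Fq, whose support is bounded
   below: LS s f stands for w^(-s) * \sum_{k>=0} f k w^k. *)
Record lseries := LS { lsh : nat; lcoef : nat -> Fq }.

Definition lmul (a b : lseries) : lseries :=
  LS (lsh a + lsh b)
     (fun k => \sum_(j < k.+1) lcoef a j * lcoef b (k - j)).

Definition lpoly (p : {poly Fq}) : lseries := LS 0 (fun k => p`_k).
Definition lpower (g : nat -> Fq) : lseries := LS 0 g.
Definition lconst (c : Fq) : lseries := LS 0 (fun k => if k == 0%N then c else 0).
Definition lwinv (r : nat) : lseries := LS r (fun k => if k == 0%N then 1 else 0).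

Definition CT (P : lseries) : Fq := lcoef P (lsh P).

From HB Require Import structures.
From mathcomp Require Import all_boot all_order all_algebra.
From mathcomp Require Import fraction.
From mathcomp Require Import zify ring.
Import Order.TTheory GRing.Theory Num.Theory.
Local Open Scope ring_scope.

(* Write G_z(w) = \sum_i coefG z i w^i, so that the series in the theorem is
   G_(n-2r).  Extracting the constant term turns the right-hand side into
   q^(r(n-r)) \sum_j [w^j]((1-w)(1+w)^n) * coefG (n-2r) (r-j).  The q-Pascal
   rule for q-binomial coefficients gives the three-term relation
   q^z (1+w) G_(z-1) = q^z G_(z-2) + (q^z - 1) w G_z,
   and since (1-w)(1+w)^(n+1) = (1+w) (1-w)(1+w)^n, this relation turns into
   the defining recurrence of A_n^r. *)

Lemma q_neq0 : q != 0.
Proof. by rewrite /q tofrac_eq0 polyX_eq0. Qed.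

Lemma oneB_qX_neq0 j : (0 < j)%N -> 1 - q ^+ j != 0.
Proof.
move=> j_gt0; rewrite /q -rmorphXn -(rmorph1 (@tofrac _)) -rmorphB tofrac_eq0.
apply/eqP => /(congr1 (fun p : {poly rat} => p`_0)).
by rewrite coefB coef1 coefXn coef0; case: j j_gt0.
Qed.

Lemma qfactorial_neq0 k : \prod_(j < k) (1 - q ^+ j.+1) != 0.
Proof. by rewrite prodf_seq_neq0; apply/allP => j _; apply: oneB_qX_neq0. Qed.

Lemma qbinom_nat (N k : nat) : qbinom N k =
  if (k <= N)%N then
    (\prod_(j < k) (1 - q ^+ (N - j)%N)) / (\prod_(j < k) (1 - q ^+ j.+1))
  else 0.
Proof. by []. Qed.

Lemma qbinom_addn_lt0 (z : int) (i : nat) : z < 0 -> qbinom (i%:Z + z) i = 0.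
Proof.
move=> z_lt0; case E: (i%:Z + z) => [m|m] //=.
by rewrite ifN //; apply/negP => ?; lia.
Qed.

Lemma qbinom0 (N : nat) : qbinom N 0 = 1.
Proof. by rewrite qbinom_nat leq0n !big_ord0 divr1. Qed.

Lemma qbinomnn (k : nat) : qbinom k k = 1.
Proof.
rewrite qbinom_nat leqnn (reindex_inj rev_ord_inj) /=.
under eq_bigr => j _ do rewrite subKn //.
by rewrite divff // qfactorial_neq0.
Qed.

Lemma qbinomS_mul (N k : nat) : (k < N)%N ->
  qbinom N k.+1 * (1 - q ^+ k.+1) = qbinom N k * (1 - q ^+ (N - k)).
Proof.
move=> lt_kN; rewrite !qbinom_nat lt_kN ltnW // big_ord_recr /= big_ord_recr /=.
have mul_div_cancel (F : fieldType) (U D a b : F) :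
    a != 0 -> D != 0 -> U * b / (D * a) * a = U / D * b.
  by move=> a0 D0; field; rewrite a0 D0.
by rewrite mul_div_cancel ?qfactorial_neq0 ?oneB_qX_neq0.
Qed.

Lemma qbinomSS (N k : nat) : (k < N)%N ->
  qbinom N.+1 k.+1 = q ^+ (N - k) * qbinom N k + qbinom N k.+1.
Proof.
move=> lt_kN; rewrite !qbinom_nat lt_kN ltnW // ltnW //.
rewrite big_ord_recl /= big_ord_recr /= big_ord_recr /=.
under eq_bigr => j _ do rewrite /bump /= add1n subSS.
rewrite subn0.
have -> : q ^+ N.+1 = q ^+ (N - k) * q ^+ k.+1.
  by rewrite -exprD addnS subnK // ltnW.
have split_frac (F : fieldType) (U D x y : F) : 1 - y != 0 -> D != 0 ->
    (1 - x * y) * U / (D * (1 - y)) = x * (U / D) + U * (1 - x) / (D * (1 - y)).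
  by move=> y1 D0; field; rewrite y1 D0.
by rewrite split_frac ?qfactorial_neq0 ?oneB_qX_neq0.
Qed.

Definition triangular (i : nat) := (i.+1 * i)./2.

Lemma triangularS i : triangular i.+1 = (triangular i + i.+1)%N.
Proof.
rewrite /triangular.
have -> : (i.+2 * i.+1 = i.+1 * i + (i.+1).*2)%N by rewrite -muln2; lia.
by rewrite halfD odd_double andbF add0n doubleK.
Qed.

Definition coefG (z : int) (i : nat) : Fq :=
  (-1) ^+ i * q ^ (- (triangular i)%:Z - i%:Z * z) * qbinom (i%:Z + z) i.

Definition coefwG (z : int) (i : nat) : Fq :=
  if i is k.+1 then coefG z k else 0.

Lemma coefG_lt0 z i : z < 0 -> coefG z i = 0.
Proof. by move=> z_lt0; rewrite /coefG qbinom_addn_lt0 // mulr0. Qed.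

Lemma coefwG_lt0 z i : z < 0 -> coefwG z i = 0.
Proof. by case: i => //= i; apply: coefG_lt0. Qed.

Lemma coefG0 (z : int) : 0 <= z -> coefG z 0 = 1.
Proof.
case: z => // M _.
by rewrite /coefG qbinom0 mulr1 mul0r oppr0 subr0 expr0z expr0 mulr1.
Qed.

Lemma coefGS_mul (M k : nat) :
  q ^+ M.+1 * (1 - q ^+ k.+1) * coefG M k.+1 = (q ^+ M.+1 - 1) * coefG M.+1 k.
Proof.
rewrite /coefG.
have -> : k.+1%:Z + M%:Z = (k + M.+1)%N by lia.
have -> : k%:Z + M.+1%:Z = (k + M.+1)%N by lia.
have eqB : qbinom (k + M.+1)%N k.+1 * (1 - q ^+ k.+1)
           = qbinom (k + M.+1)%N k * (1 - q ^+ M.+1).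
  by rewrite qbinomS_mul ?addKn // addnS ltnS leq_addr.
set e := - (triangular k.+1)%:Z - k.+1%:Z * M%:Z.
have -> : - (triangular k)%:Z - k%:Z * M.+1%:Z = e + M.+1%:Z.
  by rewrite /e triangularS; lia.
clearbody e; rewrite expfzDr ?q_neq0 // -exprnP [(-1) ^+ k.+1]exprS.
move: (q ^ e) (qbinom _ k.+1) (qbinom _ k) eqB => Q B1 B0 eqB.
transitivity (- q ^+ M.+1 * (-1) ^+ k * Q * (B1 * (1 - q ^+ k.+1))); first ring.
by rewrite eqB; ring.
Qed.

Lemma coefG_pascal (M k : nat) :
  coefG M k.+1 = q ^+ k.+1 * coefG M.+1 k.+1 + coefG M.+1 k.
Proof.
rewrite /coefG.
have -> : k.+1%:Z + M%:Z = (k + M.+1)%N by lia.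
have -> : k%:Z + M.+1%:Z = (k + M.+1)%N by lia.
have -> : k.+1%:Z + M.+1%:Z = (k + M.+1).+1%N by lia.
rewrite qbinomSS ?addKn; last by rewrite addnS ltnS leq_addr.
set e := - (triangular k.+1)%:Z - k.+1%:Z * M.+1%:Z.
have -> : - (triangular k.+1)%:Z - k.+1%:Z * M%:Z = e + k.+1%:Z by rewrite /e; lia.
have -> : - (triangular k)%:Z - k%:Z * M.+1%:Z = e + k.+1%:Z + M.+1%:Z.
  by rewrite /e triangularS; lia.
by rewrite !expfzDr ?q_neq0 // -!exprnP [(-1) ^+ k.+1]exprS; ring.
Qed.

Lemma coefG_0S k : coefG 0 k = - q ^+ k.+1 * coefG 0 k.+1.
Proof.
rewrite /coefG !addr0 !qbinomnn !mulr0 !subr0 !mulr1.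
have -> : - (triangular k)%:Z = - (triangular k.+1)%:Z + k.+1%:Z.
  by rewrite triangularS; lia.
by rewrite expfzDr ?q_neq0 // -!exprnP [(-1) ^+ k.+1]exprS; ring.
Qed.

(* It fails for the constant term at z = 1 (q on the left, 0 on the right); that
   coefficient is multiplied by zero where the relation is used. *)
Lemma coefG_rec (z : int) (i : nat) : ~~ ((z == 1) && (i == 0%N)) ->
  q ^ z * (coefG (z - 1) i + coefwG (z - 1) i)
  = q ^ z * coefG (z - 2) i + (q ^ z - 1) * coefwG z i.
Proof.
case: z => [[|[|M]]|k] z_i.
- rewrite coefG_lt0 // coefG_lt0 // coefwG_lt0 // expr0z subrr; ring.
- case: i z_i => // k _ /=.
  rewrite [coefG (_ - 2) _]coefG_lt0 // (_ : Posz 1 - 1 = Posz 0) //.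
  by rewrite (coefG_0S k) -exprnP -coefGS_mul; ring.
- have -> : M.+2%:Z - 1 = M.+1%:Z by lia.
  have -> : M.+2%:Z - 2 = M%:Z by lia.
  case: i {z_i} => [|k] /=; first by rewrite !coefG0 //; ring.
  by rewrite (coefG_pascal M k) -exprnP -coefGS_mul; ring.
- by rewrite !coefG_lt0 ?coefwG_lt0 //; ring.
Qed.

Definition Pn n : {poly Fq} := (1 - 'X) * (1 + 'X) ^+ n.

Lemma coef_onePX_exp n j : ((1 + 'X : {poly Fq}) ^+ n)`_j = 'C(n, j)%:R.
Proof.
elim: n j => [|n IH] [|j]; rewrite ?expr0 ?coef1 // exprS mulrDl mul1r coefD coefXM.
  by rewrite IH !bin0 addr0.
by rewrite !IH binS natrD addrC.
Qed.

Lemma coefPn n j :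
  (Pn n)`_j = 'C(n, j)%:R - (if j is j'.+1 then 'C(n, j')%:R else 0).
Proof. by rewrite /Pn mulrBl mul1r coefB coefXM !coef_onePX_exp; case: j. Qed.

Lemma PnS n : Pn n.+1 = Pn n + Pn n * 'X.
Proof. by rewrite /Pn exprSr mulrA mulrDr mulr1. Qed.

Lemma sum_mul_delta (F : nat -> Fq) x j :
  \sum_(a < j.+1) F a * (if (j - a)%N == 0%N then x else 0) = F j * x.
Proof.
rewrite big_ord_recr /= subnn eqxx big1 ?add0r // => a _.
by rewrite subn_eq0 leqNgt ltn_ord mulr0.
Qed.

Lemma CT_poly_const_winv_power (p : {poly Fq}) c r (f : nat -> Fq) :
  CT (lmul (lmul (lmul (lpoly p) (lconst c)) (lwinv r)) (lpower f))
  = c * \sum_(j < r.+1) p`_j * f (r - j)%N.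
Proof.
rewrite /CT /= !add0n addn0.
under eq_bigr => j _ do under eq_bigr => a _ do rewrite (sum_mul_delta (fun b => p`_b)).
under eq_bigr => j _ do rewrite (sum_mul_delta (fun a => p`_a * c)).
by rewrite mulr_sumr; apply: eq_bigr => j _; ring.
Qed.

Definition convG n r :=
  \sum_(j < r.+1) (Pn n)`_j * coefG (n%:Z - 2 * r%:Z) (r - j)%N.

Definition rhs n r := q ^ (r%:Z * (n%:Z - r%:Z)) * convG n r.

Lemma sum_coefG_shift (c : nat -> Fq) z r :
  \sum_(j < r.+1) c j * coefG z (r - j)%N
  = \sum_(j < r.+2) c j * coefwG z (r.+1 - j)%N.
Proof.
rewrite [RHS]big_ord_recr subnn /= mulr0 addr0; apply: eq_bigr => j _.
by rewrite subSn // -ltnS.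
Qed.

Lemma convG_PnS n r (z := n%:Z - 2 * r%:Z - 1) :
  convG n.+1 r.+1
  = \sum_(j < r.+2) (Pn n)`_j * (coefG z (r.+1 - j) + coefwG z (r.+1 - j)).
Proof.
rewrite /convG (_ : n.+1%:Z - 2 * r.+1%:Z = z); last by rewrite /z; lia.
rewrite PnS; under eq_bigr => j _ do rewrite coefD mulrDl.
under [in RHS]eq_bigr => j _ do rewrite mulrDr.
rewrite !big_split /=; congr (_ + _).
rewrite -(sum_coefG_shift (fun j => (Pn n)`_j)) big_ord_recl coefMX mul0r add0r.
by apply: eq_bigr => j _; rewrite lift0 coefMX subSS.
Qed.

Lemma convG_rec n r (m := n%:Z - 2 * r%:Z) :
  q ^ m * convG n.+1 r.+1 = q ^ m * convG n r.+1 + (q ^ m - 1) * convG n r.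
Proof.
rewrite convG_PnS /convG (_ : n%:Z - 2 * r.+1%:Z = m - 2); last by rewrite /m; lia.
rewrite -/m (sum_coefG_shift _ m r) !mulr_sumr -big_split /=.
apply: eq_bigr => j _.
have [/andP[/eqP m1 /eqP rj] | not_m1_rj] := boolP ((m == 1) && (r.+1 - j == 0)%N).
  have -> : (j : nat) = r.+1 by have := ltn_ord j; lia.
  have -> : n = (r.+1 + r)%N by move: m1; rewrite /m; lia.
  rewrite coefPn (_ : 'C(r.+1 + r, r) = 'C(r.+1 + r, r.+1)).
    by rewrite subrr !mul0r !mulr0 addr0.
  by rewrite -bin_sub; [congr 'C(_, _); lia | lia].
rewrite mulrCA coefG_rec //; ring.
Qed.

Lemma rhs_rec n r :
  rhs n.+1 r.+1 = q ^+ r.+1 * rhs n r.+1 + (q ^ (n%:Z - r%:Z) - q ^+ r) * rhs n r.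
Proof.
have := convG_rec n r; rewrite /rhs.
set E := r%:Z * (n%:Z - r%:Z); set m := n%:Z - 2 * r%:Z.
have -> : r.+1%:Z * (n.+1%:Z - r.+1%:Z) = E + m + r%:Z by rewrite /E /m; nia.
have -> : r.+1%:Z * (n%:Z - r.+1%:Z) = E + m + (-1) by rewrite /E /m; nia.
have -> : n%:Z - r%:Z = m + r%:Z by rewrite /m; lia.
have qVq : q ^ (-1) * q = 1.
  by rewrite (_ : -1 = - Posz 1) // -invr_expz -exprnP expr1 mulVf ?q_neq0.
clearbody E m; rewrite !expfzDr ?q_neq0 // -exprnP exprSr.
move: (q ^ E) (q ^ m) (q ^ (-1)) (q ^+ r) (convG n.+1 r.+1) (convG n r.+1) (convG n r) qVq.
move=> QE QM Qi QR C1 C2 C3 qVq eqC.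
transitivity (QE * QR * (QM * C1)); first ring.
rewrite eqC.
transitivity (QR * QE * (Qi * q) * QM * C2 + (QM * QR - QR) * QE * C3); last ring.
by rewrite qVq; ring.
Qed.

Lemma A_rhs n r : A n r = rhs n r.
Proof.
elim: n r => [|n IH] [|r].
- by rewrite /rhs /convG big_ord1 coefPn bin0 /= !subr0 mul1r subnn coefG0 ?mulr1.
- rewrite /rhs /convG big1 ?mulr0 // => j _.
  by rewrite coefG_lt0 ?mulr0 //; lia.
- by rewrite /rhs /convG big_ord1 coefPn bin0 /= !subr0 mul1r subnn coefG0 ?mulr1.
- by rewrite /= !IH rhs_rec.
Qed.

Theorem lemma1 (n r : nat) :
  A n r =
  CT (lmul (lmul (lmul (lpoly ((1 - 'X) * (1 + 'X) ^+ n))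
                        (lconst (q ^ (r%:Z * (n%:Z - r%:Z)))))
                 (lwinv r))
           (lpower (fun i : nat =>
              (-1) ^+ i
              * q ^ (- ((i.+1 * i)./2)%:Z - i%:Z * (n%:Z - 2 * r%:Z))
              * qbinom (i%:Z + n%:Z - 2 * r%:Z) i))).
Proof.
rewrite A_rhs CT_poly_const_winv_power /rhs /convG; congr (_ * _).
by apply: eq_bigr => j _; rewrite /coefG /triangular addrA.
Qed.
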